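(* Let $k\ge 1$, $N\ge 3$ and $a\ge 2$ be integers, and let $v=v_2$. (i) $$\frac{(k2^N+2a-3)!!}{(k2^N+1)!!}\equiv\begin{cases}(2a-3)!! \pmod{2^{N+1+\min\{v(a),\,N-1\}}}, & \text{if } 2\mid a,\\ (2a-3)!!+k2^N \pmod{2^{N+1}}, & \text{if } 2\nmid a.\end{cases}$$ (ii) $$(k2^N+2a-3)!!\equiv\begin{cases}(2a-3)!! \pmod{2^{N+1}}, & \text{if } 2\mid a,\\ (2a-3)!!+k2^N \pmod{2^{N+1}}, & \text{if } 2\nmid a.\end{cases}$$ (iii) If $k$ is odd, then $$(k2^N-3)!!\equiv\begin{cases}-1+(-1)^{\frac{k-1}{2}}2^{N+1}\pmod{2^{N+3}}, & \text{if } N=3,\\ -1+(-1)^{\frac{k+1}{2}}2^{N+1}\pmod{2^{N+3}}, & \text{if } N\ge 4.\end{cases}$$ In particular $(k2^N-3)!!\equiv -1+2^{N+1}\pmod{2^{N+2}}$.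
   Context: For a positive odd integer $b$, $b!!=b(b-2)\cdots3\cdot1$. $v_2$ denotes the $2$-adic valuation. *)

From mathcomp Require Import all_boot all_order all_algebra.
Set Implicit Arguments. Unset Strict Implicit. Unset Printing Implicit Defensive.

Fixpoint dfact (n : nat) : nat :=
  match n with
  | 0 => 1
  | 1 => 1
  | (m.+2) as n' => n' * dfact m
  end.

(* Write M = k 2^N.  Two factors whose offsets sum to s multiply as
   (M + x)(M + y) = xy + M(M + s); pairing the factors of (M+3)(M+5)...(M+2a-3)
   from both ends therefore gives (2a-3)!! modulo anything dividing M(M + 2a)
   when a is even, while modulo 2M a product of n shifted odd factors is the
   unshifted product plus nM.  The same pairing splits (kB - 1)!! into k blocks
   congruent to (B-1)!! modulo 2B^2, so (M - 1)!! is congruent to T^k with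
   T = (2^N - 1)!!, and squaring from 15!! upwards gives T = 1 + 2^N modulo
   2^(N+3) for N >= 4.  Hence (M + 1)!! = 1 modulo 2^(N+1), which turns (i) into
   (ii), and solving (M - 1)(M - 3)!! = 1 + k(T - 1) for (M - 3)!! gives (iii). *)

From mathcomp Require Import all_boot all_order all_algebra.
From mathcomp Require Import zify ring.
Import GRing.Theory Num.Theory.

Set Implicit Arguments.
Unset Strict Implicit.
Unset Printing Implicit Defensive.

Lemma odd_halfE n : odd n -> n = 2 * n./2 + 1.
Proof. by move=> odd_n; rewrite -{1}[n]odd_double_half odd_n -mul2n addnC. Qed.

Lemma even_halfE n : ~~ odd n -> n = 2 * n./2.
Proof. by move=> even_n; rewrite -{1}[n]odd_double_half (negbTE even_n) -mul2n. Qed.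

Lemma eq_modn_dvdW d m x y : d %| m -> x = y %[mod m] -> x = y %[mod d].
Proof. by move=> dvd_dm exy; rewrite -(modn_dvdm x dvd_dm) exy modn_dvdm. Qed.

Lemma eq_modnM d x y x' y' : x = y %[mod d] -> x' = y' %[mod d] ->
  x * x' = y * y' %[mod d].
Proof. by move=> exy exy'; rewrite -modnMm exy exy' modnMm. Qed.

Lemma modnDr_dvd d x y : d %| y -> x + y = x %[mod d].
Proof. by move=> /dvdnP [q ->]; rewrite addnC modnMDl. Qed.

Lemma muln_mod_double n M : n * M = odd n * M %[mod 2 * M].
Proof.
rewrite -{1}[n]odd_double_half -mul2n mulnDl mulnAC.
by apply: modnDr_dvd; apply: dvdn_mulr.
Qed.

Lemma sqrn_mod_double d x y : ~~ odd d -> x = y %[mod d] -> x ^ 2 = y ^ 2 %[mod 2 * d].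
Proof.
move=> even_d exy.
have sqr_mod q r : (q * d + r) ^ 2 = r ^ 2 %[mod 2 * d].
  rewrite (even_halfE even_d); move: d./2 => h.
  have -> : (q * (2 * h) + r) ^ 2 = (q * r + q ^ 2 * h) * (2 * (2 * h)) + r ^ 2 by ring.
  exact: modnMDl.
by rewrite (divn_eq x d) (divn_eq y d) !sqr_mod exy.
Qed.

Lemma expn_add1_mod u k : (1 + u) ^ k = 1 + k * u %[mod u ^ 2].
Proof.
elim: k => [|k IH]; first by rewrite mul0n addn0.
rewrite expnS -modnMmr IH modnMmr.
have -> : (1 + u) * (1 + k * u) = k * u ^ 2 + (1 + k.+1 * u) by ring.
exact: modnMDl.
Qed.

Definition progprod (b n : nat) : nat := \prod_(i < n) (b + 2 * i).

Lemma progprod0 b : progprod b 0 = 1.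
Proof. exact: big_ord0. Qed.

Lemma progprodSr b n : progprod b n.+1 = progprod b n * (b + 2 * n).
Proof. by rewrite /progprod big_ord_recr. Qed.

Lemma progprodSl b n : progprod b n.+1 = b * progprod (b + 2) n.
Proof.
rewrite /progprod big_ord_recl muln0 addn0; congr (_ * _).
by apply: eq_bigr => i _; rewrite /= mulnS addnA.
Qed.

Lemma progprodD b m n : progprod b (m + n) = progprod b m * progprod (b + 2 * m) n.
Proof.
rewrite /progprod big_split_ord; congr (_ * _).
by apply: eq_bigr => i _; rewrite /= mulnDr addnA.
Qed.

Lemma odd_progprod b n : odd b -> odd (progprod b n).
Proof.
move=> odd_b; elim: n => [|n IH]; first by rewrite progprod0.
by rewrite progprodSr oddM IH oddD odd_b oddM.
Qed.

Lemma dfactD b n : dfact (b + 2 * n) = dfact b * progprod (b + 2) n.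
Proof.
elim: n => [|n IH]; first by rewrite muln0 addn0 progprod0 muln1.
have -> : b + 2 * n.+1 = (b + 2 * n).+2 by lia.
by rewrite [LHS]/= IH progprodSr; ring.
Qed.

Lemma dfact_double_pred n : dfact (2 * n - 1) = progprod 1 n.
Proof.
case: n => [|n]; first by rewrite progprod0.
by rewrite progprodSl (_ : 2 * n.+1 - 1 = 1 + 2 * n) ?dfactD //; lia.
Qed.

Lemma dfact_gt0 n : 0 < dfact n.
Proof.
elim: n {-2}n (leqnn n) => [|m IH] [|[|n]] //= le_nm.
by rewrite muln_gt0 IH //; lia.
Qed.

Lemma progprod_pair_mod m M b p : m %| M * (M + 2 * b + 4 * p - 2) ->
  progprod (M + b) (2 * p) = progprod b (2 * p) %[mod m].
Proof.
elim: p b => [|p IH] b dvd_m; first by rewrite muln0 !progprod0.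
have [q Mq] := dvdnP dvd_m.
have pairE c : progprod c (2 * p.+1) = c * (c + 2 * (2 * p).+1) * progprod (c + 2) (2 * p).
  rewrite (_ : 2 * p.+1 = (2 * p).+2); last by lia.
  by rewrite progprodSr progprodSl mulnAC.
have outer : (M + b) * (M + b + 2 * (2 * p).+1) = q * m + b * (b + 2 * (2 * p).+1).
  rewrite -Mq (_ : M + 2 * b + 4 * p.+1 - 2 = M + 2 * b + 4 * p + 2); last by lia.
  ring.
rewrite !pairE outer -addnA; apply: eq_modnM; first by rewrite modnMDl.
apply: IH; rewrite (_ : M + 2 * (b + 2) + 4 * p - 2 = M + 2 * b + 4 * p.+1 - 2) //; lia.
Qed.

Lemma progprod_shift_mod M b n : ~~ odd M -> odd b ->
  progprod (M + b) n = progprod b n + n * M %[mod 2 * M].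
Proof.
move=> even_M odd_b; elim: n => [|n IH]; first by rewrite !progprod0.
rewrite !progprodSr -addnA -modnMml IH modnMml.
have odd_c : odd (b + 2 * n) by rewrite oddD oddM odd_b.
move: (progprod b n) (odd_progprod n odd_b) (b + 2 * n) odd_c.
move=> P /odd_halfE -> c /odd_halfE ->; move: P./2 c./2 => p r.
rewrite (even_halfE even_M); move: M./2 => h.
have -> : (2 * p + 1 + n * (2 * h)) * (2 * h + (2 * r + 1)) =
    (p + n * h + n * r) * (2 * (2 * h)) + ((2 * p + 1) * (2 * r + 1) + n.+1 * (2 * h)).
  ring.
by rewrite modnMDl.
Qed.

Lemma dfact_block_mod p k :
  dfact (k * (4 * p) - 1) = dfact (4 * p - 1) ^ k %[mod 2 * (4 * p) ^ 2].
Proof.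
have double j : j * (4 * p) = 2 * (j * (2 * p)) by ring.
rewrite double -{2}[4 * p]mul1n double !dfact_double_pred mul1n.
elim: k => [|k IH]; first by rewrite progprod0.
rewrite mulSnr progprodD [_ ^ k.+1]expnSr; apply: eq_modnM => //.
rewrite -double addnC; apply: progprod_pair_mod.
rewrite (_ : k * (4 * p) + 2 * 1 + 4 * p - 2 = k.+1 * (4 * p)); last by lia.
have -> : k * (4 * p) * (k.+1 * (4 * p)) = k * k.+1 * (4 * p) ^ 2 by ring.
apply: dvdn_mul => //.
by rewrite dvdn2 oddM /= andbN.
Qed.

Lemma dfact_pow2S_pred N : 2 <= N ->
  dfact (2 ^ N.+1 - 1) = dfact (2 ^ N - 1) ^ 2 %[mod 2 ^ (2 * N).+1].
Proof.
move=> le2N; have pow2E : 2 ^ N = 4 * 2 ^ (N - 2) by rewrite -(subnKC le2N) expnD addKn.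
have -> : 2 ^ (2 * N).+1 = 2 * (4 * 2 ^ (N - 2)) ^ 2 by rewrite -pow2E -expnM mulnC expnS.
by rewrite expnS pow2E; apply: dfact_block_mod.
Qed.

(* 7!! = 105 = 1 + 5 * 2^3 modulo 2^6 is the exception; from 15!! on the square
   of 1 + 2^N loses its 2^(2N) term. *)
Lemma dfact_pow2_pred N : 3 <= N ->
  dfact (2 ^ N - 1) = 1 + 2 ^ N * (if N == 3 then 5 else 1) %[mod 2 ^ (N + 3)].
Proof.
elim: N => // N IH; rewrite ltnS leq_eqVlt => /orP [/eqP <- //|lt2N].
rewrite eqSS (gtn_eqF lt2N) muln1.
rewrite (eq_modn_dvdW _ (dfact_pow2S_pred (ltnW lt2N))); last by rewrite dvdn_exp2l //; lia.
rewrite addSn [2 ^ (N + 3).+1]expnS (sqrn_mod_double _ (IH lt2N)); last by rewrite oddX addn3.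
case: eqP => [-> //|neq3N]; rewrite muln1.
have -> : (1 + 2 ^ N) ^ 2 = 2 ^ (N - 4) * (2 * 2 ^ (N + 3)) + (1 + 2 ^ N.+1).
  by rewrite -expnS -expnD (_ : N - 4 + (N + 3).+1 = N + N) ?expnD ?expnS; [ring | lia].
exact: modnMDl.
Qed.

Lemma dfact_mul_pow2_pred N k : 3 <= N ->
  dfact (k * 2 ^ N - 1) = 1 + k * 2 ^ N * (if N == 3 then 5 else 1) %[mod 2 ^ (N + 3)].
Proof.
move=> le3N; set c := if N == 3 then 5 else 1.
have pow2E : 2 ^ N = 4 * 2 ^ (N - 2) by rewrite -(subnKC (ltnW le3N)) expnD addKn.
have block := dfact_block_mod (2 ^ (N - 2)) k; rewrite -pow2E in block.
rewrite (eq_modn_dvdW _ block); last by rewrite -expnM -expnS dvdn_exp2l //; lia.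
rewrite -modnXm dfact_pow2_pred // modnXm -/c -mulnA.
rewrite (eq_modn_dvdW _ (expn_add1_mod _ k)) // expnMn dvdn_mulr // -expnM dvdn_exp2l //; lia.
Qed.

Lemma dfact_mul_pow2_succ N k : 3 <= N -> dfact (k * 2 ^ N + 1) = 1 %[mod 2 ^ (N + 1)].
Proof.
move=> le3N; case: k => [//|k].
set M := k.+1 * 2 ^ N; set c := if N == 3 then 5 else 1.
have pred_mod : dfact (M - 1) = 1 + M * c %[mod 2 ^ (N + 1)].
  by apply: eq_modn_dvdW (dfact_mul_pow2_pred k.+1 le3N); rewrite dvdn_exp2l ?leq_add2l.
have pow2_dvdM : 2 ^ N %| M by apply: dvdn_mull.
have even_M : 2 %| M by apply: dvdn_mull; rewrite -(subnKC le3N) expnD dvdn_mulr.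
have even_c1 : 2 %| 1 + c by rewrite /c; case: (N == 3).
have M_gt0 : 0 < M by rewrite muln_gt0 expn_gt0.
rewrite (_ : M + 1 = (M - 1).+2) /=; last by lia.
rewrite (_ : (M - 1).+2 = M.+1); last by lia.
rewrite -modnMmr pred_mod modnMmr.
have -> : M.+1 * (1 + M * c) = 1 + (M * (1 + c) + M * M * c) by ring.
rewrite modnDr_dvd // addn1 expnSr; apply: dvdn_add; first exact: dvdn_mul.
by rewrite -mulnA; apply: dvdn_mul => //; apply: dvdn_mulr.
Qed.

Lemma dfact_shift_split M a : 2 <= a ->
  dfact (M + 2 * a - 3) = dfact (M + 1) * progprod (M + 3) (a - 2).
Proof.
move=> le2a; rewrite (_ : M + 2 * a - 3 = M + 1 + 2 * (a - 2)); last by lia.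
by rewrite dfactD -addnA.
Qed.

Lemma dfact_double_sub3 a : 2 <= a -> dfact (2 * a - 3) = progprod 3 (a - 2).
Proof. by move=> le2a; rewrite -[2 * a]add0n dfact_shift_split //= mul1n. Qed.

Lemma pow2_dvd_shift_pair N k a : 1 <= N ->
  2 ^ (N + 1 + minn (logn 2 a) (N - 1)) %| k * 2 ^ N * (k * 2 ^ N + 2 * a).
Proof.
move=> le1N; set e := minn _ _.
have le_eN : e.+1 <= N by rewrite /e; lia.
rewrite -addnA expnD; apply: dvdn_mul; first exact: dvdn_mull.
rewrite add1n expnS; apply: dvdn_add.
  by apply: dvdn_mull; rewrite -expnS dvdn_exp2l.
rewrite dvdn_pmul2l //; apply: dvdn_trans (pfactor_dvdnn 2 a).
by rewrite dvdn_exp2l // geq_minl.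
Qed.

Lemma dfact_quot_mod N k a : 1 <= N -> 2 <= a ->
  dfact (k * 2 ^ N + 2 * a - 3) %/ dfact (k * 2 ^ N + 1)
    = dfact (2 * a - 3) + odd a * (k * 2 ^ N) %[mod 2 ^ (N + 1)].
Proof.
move=> le1N le2a; rewrite dfact_shift_split // mulKn ?dfact_gt0 // dfact_double_sub3 //.
apply: (@eq_modn_dvdW _ (2 * (k * 2 ^ N))).
  by rewrite mulnCA addn1 expnS; apply: dvdn_mull.
have even_M : ~~ odd (k * 2 ^ N) by rewrite -(subnKC le1N) expnS mulnCA oddM.
by rewrite progprod_shift_mod // -modnDmr muln_mod_double modnDmr oddB ?addbF.
Qed.

Lemma dfact_quot_mod_even N k a : 1 <= N -> 2 <= a -> ~~ odd a ->
  dfact (k * 2 ^ N + 2 * a - 3) %/ dfact (k * 2 ^ N + 1)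
    = dfact (2 * a - 3) %[mod 2 ^ (N + 1 + minn (logn 2 a) (N - 1))].
Proof.
move=> le1N le2a even_a; rewrite dfact_shift_split // mulKn ?dfact_gt0 // dfact_double_sub3 //.
have [p a2E] : exists p, a - 2 = 2 * p.
  by exists (a - 2)./2; apply: even_halfE; rewrite oddB ?addbF.
rewrite a2E; apply: progprod_pair_mod.
rewrite (_ : k * 2 ^ N + 2 * 3 + 4 * p - 2 = k * 2 ^ N + 2 * a); last by lia.
exact: pow2_dvd_shift_pair.
Qed.

Lemma dfact_shift_mod N k a : 3 <= N -> 2 <= a ->
  dfact (k * 2 ^ N + 2 * a - 3) = dfact (2 * a - 3) + odd a * (k * 2 ^ N) %[mod 2 ^ (N + 1)].
Proof.
move=> le3N le2a; rewrite -(dfact_quot_mod k (ltnW (ltnW le3N)) le2a).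
by rewrite dfact_shift_split // mulKn ?dfact_gt0 // -modnMml dfact_mul_pow2_succ // modnMml mul1n.
Qed.

Section IntCongruences.
Local Open Scope ring_scope.

Lemma eq_modz_nat (d x y : nat) : x = y %[mod d] -> (x%:Z = y%:Z %[mod d%:Z])%Z.
Proof. by move=> exy; rewrite !modz_nat exy. Qed.

Lemma natz_exp2 n : (2 ^ n)%N%:Z = 2 ^+ n.
Proof. by rewrite -natz natrX. Qed.

Lemma eq_modz_dvdW (d m x y : int) : (d %| m)%Z -> (x = y %[mod m])%Z -> (x = y %[mod d])%Z.
Proof.
move=> dvd_dm /eqP; rewrite eqz_mod_dvd => dvd_m; apply/eqP; rewrite eqz_mod_dvd.
exact: dvdz_trans dvd_m.
Qed.

Lemma eq_modz_predM_cancel (d M D r : int) : (d %| M ^+ 2)%Z ->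
  ((M - 1) * D = r %[mod d])%Z -> (D = - (M + 1) * r %[mod d])%Z.
Proof.
move=> dvd_M2 /eqP; rewrite eqz_mod_dvd => dvd_r; apply/eqP; rewrite eqz_mod_dvd.
have -> : D - - (M + 1) * r = M ^+ 2 * D - (M + 1) * ((M - 1) * D - r) by ring.
by apply: rpredB; [apply: dvdz_mulr | apply: dvdz_mull].
Qed.

Lemma odd_sign_mod4 k : odd k -> (k%:Z = (-1) ^+ ((k - 1) %/ 2) %[mod 4])%Z.
Proof.
move=> /odd_halfE ->; rewrite (_ : ((2 * k./2 + 1 - 1) %/ 2 = k./2)%N); last by lia.
rewrite -signr_odd -{1}[k./2]odd_double_half -mul2n; move: k./2./2 => h.
apply/eqP; rewrite eqz_mod_dvd; apply/dvdzP.
by case: (odd k./2); [exists (h%:Z + 1) | exists h%:Z]; rewrite !(PoszD, PoszM) /=; ring.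
Qed.

Lemma sign_pow2_mod j n : ((-1) ^+ j * 2 ^+ (n + 1) = 2 ^+ (n + 1) %[mod 2 ^+ (n + 2)])%Z.
Proof.
rewrite -signr_odd; case: (odd j); last by rewrite mul1r.
by apply/eqP; rewrite eqz_mod_dvd; apply/dvdzP; exists (-1); rewrite !exprD; ring.
Qed.

Lemma dfact_mul_pow2_sub3 N k : (3 <= N)%N -> (0 < k)%N ->
  ((dfact (k * 2 ^ N - 3))%:Z
     = - 1 - k%:Z * 2 ^+ (N + 1) * (if N == 3%N then 3 else 1) %[mod 2 ^+ (N + 3)])%Z.
Proof.
move=> le3N k_gt0; have := eq_modz_nat (dfact_mul_pow2_pred k le3N).
set M := (k * 2 ^ N)%N; set c := (if N == 3 then 5 else 1)%N.
have M_ge3 : (3 <= M)%N.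
  by apply: leq_trans (leq_pmull _ k_gt0); apply: leq_trans le3N (ltnW (ltn_expl _ _)).
have dfact_pred : dfact (M - 1) = ((M - 1) * dfact (M - 3))%N.
  by rewrite (_ : (M - 1 = (M - 3).+2)%N) //; lia.
rewrite dfact_pred !PoszM PoszD -subzn ?natz_exp2; last exact: leq_trans M_ge3.
move=> /eq_modz_predM_cancel ->; last first.
  rewrite /M PoszM natz_exp2 exprMn -exprM.
  by apply: dvdz_mull; rewrite dvdz_exp2l //; lia.
have pow2N : 2 ^+ N = 2 ^+ 3 * 2 ^+ (N - 3) :> int by rewrite -exprD subnKC.
rewrite /M !PoszM natz_exp2 !exprD pow2N; move: (2 ^+ (N - 3)) => y.
apply/eqP; rewrite eqz_mod_dvd; apply/dvdzP.
by exists (- c%:Z * k%:Z ^+ 2 * y); rewrite /c; case: (N == 3%N); ring.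
Qed.

Lemma dfact_mul_pow2_sub3_sign N k : (3 <= N)%N -> odd k ->
  ((dfact (k * 2 ^ N - 3))%:Z
     = -1 + (-1) ^+ ((k - 1) %/ 2 + (N != 3%N)) * 2 ^+ (N + 1) %[mod 2 ^+ (N + 3)])%Z.
Proof.
move=> le3N odd_k; rewrite dfact_mul_pow2_sub3 ?odd_gt0 // [(-1) ^+ (_ + _)]exprD.
have /eqP := odd_sign_mod4 odd_k; rewrite eqz_mod_dvd => /dvdzP [s k_sign].
set sign : int := (-1) ^+ ((k - 1) %/ 2) in k_sign *.
have -> : k%:Z = sign + s * 4 by rewrite -k_sign; ring.
have -> : 2 ^+ (N + 3) = 2 ^+ (N + 1) * 2 ^+ 2 :> int by rewrite -exprD -addnA.
clear k_sign; move: sign (2 ^+ (N + 1)) => sign P.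
apply/eqP; rewrite eqz_mod_dvd; apply/dvdzP.
by case: (N == 3%N) => /=; [exists (- sign - 3 * s) | exists (- s)]; ring.
Qed.

End IntCongruences.

Theorem lemma4p2 (k N a : nat) (hk : 1 <= k) (hN : 3 <= N) (ha : 2 <= a) :
  (* (i) *)
  (if ~~ odd a then
     dfact (k * 2 ^ N + 2 * a - 3) %/ dfact (k * 2 ^ N + 1)
       = dfact (2 * a - 3) %[mod 2 ^ (N + 1 + minn (logn 2 a) (N - 1))]
   else
     dfact (k * 2 ^ N + 2 * a - 3) %/ dfact (k * 2 ^ N + 1)
       = dfact (2 * a - 3) + k * 2 ^ N %[mod 2 ^ (N + 1)]) /\
  (* (ii) *)
  (if ~~ odd a then
     dfact (k * 2 ^ N + 2 * a - 3) = dfact (2 * a - 3) %[mod 2 ^ (N + 1)]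
   else
     dfact (k * 2 ^ N + 2 * a - 3) = dfact (2 * a - 3) + k * 2 ^ N %[mod 2 ^ (N + 1)]) /\
  (* (iii) *)
  (odd k ->
     ((if N == 3 then
        ((dfact (k * 2 ^ N - 3))%:Z
           = -1 + (-1) ^+ ((k - 1) %/ 2) * 2 ^+ (N + 1) %[mod 2 ^+ (N + 3)])%Z
      else
        ((dfact (k * 2 ^ N - 3))%:Z
           = -1 + (-1) ^+ ((k + 1) %/ 2) * 2 ^+ (N + 1) %[mod 2 ^+ (N + 3)])%Z) /\
      ((dfact (k * 2 ^ N - 3))%:Z = -1 + 2 ^+ (N + 1) %[mod 2 ^+ (N + 2)])%Z)).
Proof.
have le1N : 1 <= N by apply: leq_trans hN.
split; [|split].
- case: ifP => [even_a | /negbFE odd_a]; first exact: dfact_quot_mod_even.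
  by rewrite dfact_quot_mod // odd_a mul1n.
- case: ifP => [/negbTE even_a | /negbFE odd_a]; rewrite dfact_shift_mod //.
    by rewrite even_a mul0n addn0.
  by rewrite odd_a mul1n.
- move=> odd_k; have D_mod := dfact_mul_pow2_sub3_sign hN odd_k; split.
  + have [N3 | N3] := eqVneq N 3.
      by subst N; rewrite addn0 in D_mod.
    have k_half : (k + 1) %/ 2 = (k - 1) %/ 2 + 1 by move/odd_halfE: odd_k => kE; clear -kE; lia.
    by rewrite N3 in D_mod; rewrite k_half.
  + rewrite (eq_modz_dvdW _ D_mod); last by rewrite dvdz_exp2l ?leq_add2l.
    by rewrite -modzDmr sign_pow2_mod modzDmr.
Qed.
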